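(* Let $s,t,z$ be positive integers. For $\lambda\in\{0,\dots,z\}$ let $\theta=ts+\lambda$, $q=\min\{\lfloor\frac{z-1}{\lambda}\rfloor,t-1\}$, let $\mathbf P(C_A),\mathbf P(C_B),\mathbf P(S_A),\mathbf P(S_B)$ be the exponent sets described in the context, and let $N(\lambda)=\big|(\mathbf P(C_A)\cup\mathbf P(S_A))+(\mathbf P(C_B)\cup\mathbf P(S_B))\big|$ be the number of workers needed by AGE-CMPC with parameter $\lambda$. The number of workers required by AGE-CMPC is $N_{\text{AGE-CMPC}}=\min_{\lambda\in\{0,\dots,z\}}N(\lambda)$. Then $N_{\text{AGE-CMPC}}=2s+2z-1$ if $t=1$, and $N_{\text{AGE-CMPC}}=\min_{\lambda\in\{0,\dots,z\}}\Gamma(\lambda)$ if $t\ge2$, where $\Gamma(\lambda)=\Upsilon_1=2st^2+2z-1$ if $z>ts-s$, $\lambda=0$; $\Upsilon_2=st^2+3st-2s+t(z-1)+1$ if $z\le ts-s$, $\lambda=0$; $\Upsilon_3=2ts+(ts+z)(t-1)+2z-1$ if $\lambda=z$; $\Upsilon_4=(q+2)ts+\theta(t-1)+2z-1$ if $z>ts$, $0<\lambda<z$; $\Upsilon_5=3ts+\theta(t-1)+2z-1$ if $z\le ts$, $0<\lambda<z$, $ts<\lambda+s-1$; $\Upsilon_6=2ts+\theta(t-1)+(q+2)z-q-1$ if $\lambda+s-1<z\le ts$, $0<\lambda<z$, $q\lambda\ge s$; $\Upsilon_7=\theta(t+1)+q(z-1)-2\lambda+z+ts+\min\{0,z+s(1-t)-\lambda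 q-1\}$ if $\lambda+s-1<z\le ts$, $0<\lambda<z$, $q\lambda<s$; $\Upsilon_8=2ts+\theta(t-1)+3z+(\lambda+s-1)q-\lambda-s-1$ if $z\le\lambda+s-1\le ts$, $0<\lambda<z$, $q\lambda\ge s$; $\Upsilon_9=\theta(t+1)+q(s-1)-3\lambda+3z-1+\min\{0,ts-z+1+\lambda q-s\}$ if $z\le\lambda+s-1\le ts$, $0<\lambda<z$, $q\lambda<s$.
   Context: AGE-CMPC with parameter $\lambda$ uses $F_A=C_A+S_A$, $F_B=C_B+S_B$ with exponent sets: $\mathbf P(C_A)=\{j+si:0\le i\le t-1,0\le j\le s-1\}$, $\mathbf P(C_B)=\{(s-1-k)+\theta l:0\le k\le s-1,0\le l\le t-1\}$; $\mathbf P(S_A)=\{ts+\theta l+w:0\le l\le q-1,0\le w\le\lambda-1\}\cup\{ts+\theta q+u:0\le u\le z-1-q\lambda\}$ if $z>\lambda$ and $t\ne1$, and $\mathbf P(S_A)=\{ts+u:0\le u\le z-1\}$ if $z\le\lambda$ or $t=1$; $\mathbf P(S_B)=\{ts+\theta(t-1)+r:0\le r\le z-1\}$. Here $\mathbf X+\mathbf Y=\{a+b:a\in\mathbf X,b\in\mathbf Y\}$, and the required number of workers equals the number of monomials of $F_A(x)F_B(x)$. Convention: for $\lambda=0$ the quotient $\frac{z-1}{\lambda}$ is treated as $+\infty$, so $q=t-1$. *)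

From mathcomp Require Import all_boot all_order all_algebra.
Set Implicit Arguments. Unset Strict Implicit. Unset Printing Implicit Defensive.
Import Order.TTheory GRing.Theory Num.Theory.

(* Exponent sets are represented as duplicate-allowed lists of naturals;
   cardinalities are taken after [undup]. *)

Definition sumset (X Y : seq nat) : seq nat := [seq a + b | a <- X, b <- Y].

Definition theta (s t l : nat) : nat := t * s + l.

(* q = min(floor((z-1)/lambda), t-1), with (z-1)/0 = +infinity, so q = t-1 at lambda = 0 *)
Definition qpar (t z l : nat) : nat :=
  if l == 0 then t.-1 else minn ((z.-1) %/ l) t.-1.

Definition P_CA (s t : nat) : seq nat :=
  [seq j + s * i | i <- iota 0 t, j <- iota 0 s].

Definition P_CB (s t l : nat) : seq nat :=
  [seq (s - 1 - k) + theta s t l * m | k <- iota 0 s, m <- iota 0 t].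

Definition P_SA (s t z l : nat) : seq nat :=
  let q := qpar t z l in
  if (l < z) && (t != 1) then
    [seq t * s + theta s t l * m + w | m <- iota 0 q, w <- iota 0 l]
    ++ [seq t * s + theta s t l * q + u | u <- iota 0 (z - q * l)]
  else [seq t * s + u | u <- iota 0 z].

Definition P_SB (s t z l : nat) : seq nat :=
  [seq t * s + theta s t l * (t - 1) + r | r <- iota 0 z].

Definition Nworkers (s t z l : nat) : nat :=
  size (undup (sumset (P_CA s t ++ P_SA s t z l) (P_CB s t l ++ P_SB s t z l))).

Definition N_AGE (s t z : nat) : nat :=
  \big[minn/Nworkers s t z 0]_(l < z.+1) Nworkers s t z l.

Local Open Scope ring_scope.

Definition Gamma (s t z l : nat) : int :=
  let S := s%:Z in let T := t%:Z in let Z := z%:Z in let L := l%:Z in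
  let Th := (theta s t l)%:Z in let Q := (qpar t z l)%:Z in
  if l == 0%N then
    if (t * s - s < z)%N then 2 * S * T ^+ 2 + 2 * Z - 1
    else S * T ^+ 2 + 3 * S * T - 2 * S + T * (Z - 1) + 1
  else if l == z then
    2 * T * S + (T * S + Z) * (T - 1) + 2 * Z - 1
  else
    if (t * s < z)%N then (Q + 2) * T * S + Th * (T - 1) + 2 * Z - 1
    else if (t * s < l + s - 1)%N then 3 * T * S + Th * (T - 1) + 2 * Z - 1
    else if (l + s - 1 < z)%N then
      if (s <= qpar t z l * l)%N then
        2 * T * S + Th * (T - 1) + (Q + 2) * Z - Q - 1
      else
        Th * (T + 1) + Q * (Z - 1) - 2 * L + Z + T * S
          + Num.min 0 (Z + S * (1 - T) - L * Q - 1)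
    else
      if (s <= qpar t z l * l)%N then
        2 * T * S + Th * (T - 1) + 3 * Z + (L + S - 1) * Q - L - S - 1
      else
        Th * (T + 1) + Q * (S - 1) - 3 * L + 3 * Z - 1
          + Num.min 0 (T * S - Z + 1 + L * Q - S).

From mathcomp Require Import all_boot all_order all_algebra.
From mathcomp Require Import zify.
Import Order.TTheory GRing.Theory Num.Theory.

(* The exponents
   of F_A cover [0, theta), followed with period theta by q runs of length
   lambda and one run of length z - q lambda; those of F_B are the t runs
   theta m + [0, s) followed by one run of length z.  Hence the sumset is the
   interval [0, theta (t - 1) + 2ts) followed by q + 1 blocks of period theta,
   block i covering an initial segment of length [block_len i], which gives a
   closed form for N(lambda).  Comparing it with Gamma(lambda) branch by
   branch, N(lambda) and Gamma(lambda) always have the same minimum with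
   N(z) = Gamma(z): either they are equal, or both are at least N(z).  So the
   minima over lambda agree.  For t = 1 both exponent sets are [0, s + z). *)

Lemma sumsetP (X Y : seq nat) n :
  reflect (exists a b, [/\ a \in X, b \in Y & n = a + b]) (n \in sumset X Y).
Proof. exact: allpairsPdep. Qed.

Lemma mem_sumset_add [X Y : seq nat] [a b] : a \in X -> b \in Y -> a + b \in sumset X Y.
Proof. by move=> a_in b_in; apply/sumsetP; exists a, b. Qed.

Lemma count_iota_lt (p : pred nat) a n c :
  (forall y, y < n -> p (a + y) = (y < c)) -> count p (iota a n) = minn c n.
Proof.
move=> pE; rewrite -[a]addn0 iotaDl count_map.
transitivity (count (fun y => y < c) (iota 0 n)).
  by apply: eq_in_count => y; rewrite mem_iota => /andP[_ ?] /=; exact: pE.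
elim: n {pE} => [|n IH]; first by rewrite minn0.
by rewrite -addn1 iotaD count_cat IH /=; lia.
Qed.

Lemma size_undup_sumset_iota (X Y : seq nat) a b : 0 < a -> 0 < b ->
  (forall x, (x \in X) = (x < a)) -> (forall y, (y \in Y) = (y < b)) ->
  size (undup (sumset X Y)) = a + b - 1.
Proof.
move=> a_gt0 b_gt0 memX memY.
have /perm_size -> : perm_eq (undup (sumset X Y)) (iota 0 (a + b - 1)).
  apply: uniq_perm; [exact: undup_uniq | exact: iota_uniq |] => n.
  rewrite mem_undup mem_iota add0n; apply/sumsetP/idP => [[x [y]] | n_lt].
    by rewrite memX memY => -[x_lt y_lt ->]; lia.
  by exists (minn n (a - 1)), (n - minn n (a - 1)); rewrite memX memY; split; lia.
by rewrite size_iota.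
Qed.

Lemma bigmin_ord_le d (T : orderType d) n (F G : nat -> T) :
  (forall i, i <= n -> (Order.min (F i) (F n) <= G i)%O) ->
  (\big[Order.min/F 0]_(i < n.+1) F i <= \big[Order.min/G 0]_(i < n.+1) G i)%O.
Proof.
move=> FG; have minF i : i <= n ->
    (\big[Order.min/F 0]_(j < n.+1) F j <= Order.min (F i) (F n))%O.
  move=> i_le; rewrite le_min (bigmin_le _ (Ordinal (i_le : i < n.+1))).
  exact: (bigmin_le _ ord_max).
apply/bigmin_geP; split => [|i _]; first exact: le_trans (minF 0 (leq0n n)) (FG 0 (leq0n n)).
exact: le_trans (minF i (ltn_ord i)) (FG i (ltn_ord i)).
Qed.

Lemma eq_bigmin_ord_last d (T : orderType d) n (F G : nat -> T) :
  F n = G n -> (forall i, i <= n -> Order.min (F i) (F n) = Order.min (G i) (F n)) ->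
  \big[Order.min/F 0]_(i < n.+1) F i = \big[Order.min/G 0]_(i < n.+1) G i.
Proof.
move=> FGn FG; apply: le_anti; rewrite !bigmin_ord_le // => i i_le.
  by rewrite -FGn -FG // ge_min lexx.
by rewrite FG // ge_min lexx.
Qed.

Lemma min_lb_eq d (T : orderType d) (x y c : T) :
  (c <= x)%O -> (c <= y)%O -> Order.min x c = Order.min y c.
Proof. by move=> cx cy; rewrite !min_r. Qed.

Section ExponentSets.
Variables s t z l : nat.

Lemma mem_P_CA a : 0 < s -> (a \in P_CA s t) = (a < t * s).
Proof.
move=> s_gt0; apply/allpairsPdep/idP => [[i [j [+ + ->]]]|a_lt].
  by rewrite !mem_iota /=; nia.
exists (a %/ s), (a %% s); rewrite !mem_iota /= ltn_mod s_gt0 ltn_divLR //.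
by rewrite add0n [s * _]mulnC addnC -divn_eq.
Qed.

Lemma P_CBP b :
  reflect (exists m r, [/\ m < t, r < s & b = theta s t l * m + r]) (b \in P_CB s t l).
Proof.
apply: (iffP allpairsPdep) => [[k [m [+ + ->]]]|[m [r [m_lt r_lt ->]]]].
  by rewrite !mem_iota => k_lt m_lt; exists m, (s - 1 - k); split; lia.
by exists (s - 1 - r), m; rewrite !mem_iota; split; lia.
Qed.

Lemma P_SBP b :
  reflect (exists2 r, r < z & b = t * s + theta s t l * (t - 1) + r) (b \in P_SB s t z l).
Proof.
apply: (iffP mapP) => [[r] | [r r_lt ->]].
  by rewrite mem_iota => r_lt ->; exists r; lia.
by exists r; rewrite ?mem_iota; lia.
Qed.

End ExponentSets.

Section Qpar.
Variables t z l : nat.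

Lemma qpar0 : qpar t z 0 = t - 1.
Proof. by rewrite /qpar eqxx; lia. Qed.

Lemma qpar_z : 0 < z -> qpar t z z = 0.
Proof. by move=> z_gt0; rewrite /qpar gtn_eqF // divn_small ?min0n //; lia. Qed.

Lemma qpar_le : qpar t z l <= t - 1.
Proof. by rewrite /qpar; case: eqP => _; lia. Qed.

Lemma qpar_mul_lt : 0 < z -> qpar t z l * l < z.
Proof.
move=> z_gt0; rewrite /qpar; case: eqP => [-> | _]; first lia.
apply: leq_ltn_trans (leq_mul (geq_minl _ _) (leqnn l)) _.
by have := leq_divM z.-1 l; lia.
Qed.

Lemma qpar_lt_pred : qpar t z l < t - 1 -> z <= qpar t z l * l + l.
Proof.
rewrite /qpar; case: eqP => [_ | /eqP l_neq0]; first lia.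
move=> q_lt; have -> : minn (z.-1 %/ l) t.-1 = z.-1 %/ l by lia.
by have := @ltn_ceil z.-1 l; rewrite lt0n l_neq0 => /(_ isT); lia.
Qed.

Lemma qpar_gt0 : 1 < t -> l < z -> 0 < qpar t z l.
Proof.
rewrite /qpar => t_gt1 l_lt_z; case: eqP => [_ | /eqP l_neq0]; first lia.
by rewrite leq_min divn_gt0 ?lt0n //; lia.
Qed.

End Qpar.

Lemma Nworkers_t1 s z l : 0 < s -> 0 < z -> Nworkers s 1 z l = 2 * s + 2 * z - 1.
Proof.
move=> s_gt0 z_gt0; rewrite /Nworkers (@size_undup_sumset_iota _ _ (s + z) (s + z)); try lia.
  move=> a; rewrite mem_cat mem_P_CA // mul1n /P_SA andbF.
  apply/orP/idP => [[a_lt | /mapP[u]] | a_lt]; first lia.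
    by rewrite mem_iota => u_lt ->; lia.
  case: (ltnP a s) => [|s_le]; [by left | right].
  by apply/mapP; exists (a - s); rewrite ?mem_iota; lia.
move=> b; rewrite mem_cat; apply/orP/idP => [[/P_CBP[m [r [m_lt r_lt ->]]] | /P_SBP[r r_lt ->]] | b_lt].
- by rewrite (_ : m = 0) ?muln0; lia.
- by rewrite subnn muln0; lia.
case: (ltnP b s) => [b_lt_s | s_le]; [left | right].
  by apply/P_CBP; exists 0, b; rewrite muln0.
by apply/P_SBP; exists (b - s); rewrite ?subnn ?muln0; lia.
Qed.

Section SumsetStructure.
Variables s t z l : nat.
Hypotheses (s_gt0 : 0 < s) (t_gt1 : 1 < t) (z_gt0 : 0 < z) (l_le_z : l <= z).

Local Notation th := (theta s t l).
Local Notation q := (qpar t z l).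
Local Notation A := (P_CA s t ++ P_SA s t z l).
Local Notation B := (P_CB s t l ++ P_SB s t z l).

(* At lambda = z the definition of P_SA takes its second branch, which is the
   first one with q = 0. *)
Lemma P_SAP a :
  reflect ((exists m w, [/\ m < q, w < l & a = t * s + th * m + w]) \/
           (exists2 u, u < z - q * l & a = t * s + th * q + u))
          (a \in P_SA s t z l).
Proof.
rewrite /P_SA (_ : t != 1) ?andbT; last lia.
case: ltnP => [l_lt_z | z_le_l].
  rewrite mem_cat; apply: (iffP orP) => -[].
  - move/allpairsPdep => [m [w [+ + ->]]]; rewrite !mem_iota => m_lt w_lt.
    by left; exists m, w; split; lia.
  - by move/mapP => [u]; rewrite mem_iota => u_lt ->; right; exists u; lia.
  - move=> [m [w [m_lt w_lt ->]]]; left; apply/allpairsPdep.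
    by exists m, w; rewrite !mem_iota; split; lia.
  - by move=> [u u_lt ->]; right; apply/mapP; exists u; rewrite ?mem_iota; lia.
have l_eq_z : l = z by lia.
rewrite l_eq_z qpar_z // mul0n muln0 subn0 addn0.
apply: (iffP mapP) => [[u] | [[m [w [//]]] | [u u_lt ->]]].
  by rewrite mem_iota => u_lt ->; right; exists u.
by exists u; rewrite ?mem_iota.
Qed.

Lemma low_SA_mem [m w] : m < q -> w < l -> t * s + th * m + w \in A.
Proof. by move=> m_lt w_lt; rewrite mem_cat; apply/orP; right; apply/P_SAP; left; exists m, w. Qed.

Lemma high_SA_mem [u] : u < z - q * l -> t * s + th * q + u \in A.
Proof. by move=> u_lt; rewrite mem_cat; apply/orP; right; apply/P_SAP; right; exists u. Qed.

Lemma theta_prefix_mem a : a < th -> a \in A.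
Proof.
move=> a_lt; case: (ltnP a (t * s)) => [a_lt_ts | ts_le_a].
  by rewrite mem_cat mem_P_CA ?a_lt_ts.
have a_eq : a = t * s + th * 0 + (a - t * s) by lia.
rewrite /theta in a_lt; have [q0 | q_gt0] := posnP q.
  by rewrite a_eq -q0; apply: high_SA_mem; rewrite q0; lia.
by rewrite a_eq; apply: low_SA_mem; lia.
Qed.

Lemma CB_mem [m r] : m < t -> r < s -> th * m + r \in B.
Proof. by move=> m_lt r_lt; rewrite mem_cat; apply/orP; left; apply/P_CBP; exists m, r. Qed.

Lemma SB_mem [r] : r < z -> t * s + th * (t - 1) + r \in B.
Proof. by move=> r_lt; rewrite mem_cat; apply/orP; right; apply/P_SBP; exists r. Qed.

Definition prefix_len := th * (t - 1) + 2 * (t * s).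
Definition inner_len := l + maxn (z - 1) (s - 1 + maxn l (z - q * l)).
Definition last_len := l + maxn (z - 1) (z - q * l + s - 1).
Definition top_len := 2 * z - q * l - 1.
Definition block_len i :=
  if i.+1 < q then inner_len else if i.+1 == q then last_len else top_len.

Definition covered n := n < prefix_len \/
  exists i y, [/\ i <= q, y < block_len i & n = prefix_len + th * i + y].

Lemma block_len_ge [i] : i < q ->
  l + z - 1 <= block_len i /\ l + (z - q * l + s - 1) <= block_len i.
Proof.
by rewrite /block_len /inner_len /last_len => i_lt; repeat case: ifP => ?; lia.
Qed.

Lemma block_len0_ge : z - 1 <= block_len 0.
Proof.
have [q0 | q_gt0] := posnP q; last by have := block_len_ge q_gt0; lia.
by rewrite /block_len /top_len q0 /=; lia.
Qed.

Lemma block_len_top : block_len q = top_len.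
Proof. by rewrite /block_len ltnNge leqnSn /= (gtn_eqF (ltnSn _)). Qed.

Lemma block_len_step i : i < q -> block_len i <= th + block_len i.+1.
Proof.
have sts : s <= t * s by rewrite leq_pmull; lia.
have := qpar_mul_lt t z l z_gt0; rewrite /block_len /inner_len /last_len /top_len /theta.
by move=> i_lt; repeat case: ifP => ?; lia.
Qed.

(* A block may spill past the start of the next one, but never beyond that
   block's own covered segment; so block i contributes min (block_len i) theta. *)
Lemma block_len_chain [i j] : i <= j -> j <= q -> block_len i <= th * (j - i) + block_len j.
Proof.
move=> ij; rewrite -(subnKC ij) addKn; elim: (j - i) => [|k IH] jq.
  by rewrite muln0 addn0.
by have := IH ltac:(lia); have := @block_len_step (i + k) ltac:(lia); rewrite addnS mulnS; lia.
Qed.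

Lemma theta_mul_t : th * t = th * (t - 1) + th.
Proof. by rewrite -mulnSr; congr (_ * _); lia. Qed.

Lemma prefix_shift i : t * s + th * (t + i) = prefix_len + th * i + l.
Proof. by rewrite mulnDr theta_mul_t /prefix_len /theta; lia. Qed.

Lemma covered_shift k v :
  (k.+1 < t -> v < th + t * s) ->
  (k.+1 = t -> v < t * s + block_len 0) ->
  (t <= k -> k - t <= q /\ l + v < block_len (k - t)) ->
  covered (t * s + th * k + v).
Proof.
move=> low mid high; case: (ltngtP k.+1 t) => [k_lt | t_le | k_eq].
- left; have : th * k.+1 <= th * (t - 1) by rewrite leq_mul2l; lia.
  by have := low k_lt; rewrite mulnS /prefix_len; lia.
- rewrite ltnS in t_le; have [i_le v_lt] := high t_le; right; exists (k - t), (l + v); split => //.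
  by rewrite -{1}(subnKC t_le) addnA prefix_shift; lia.
- have := mid k_eq; have -> : k = t - 1 by lia.
  rewrite /covered /prefix_len.
  case: (ltnP v (t * s)) => [v_lt _ | ts_le v_lt]; first by left; lia.
  by right; exists 0, (v - t * s); split; lia.
Qed.

Lemma covered_add_CB a m r : a \in A -> m < t -> r < s -> covered (a + (th * m + r)).
Proof.
have sts : s <= t * s by rewrite leq_pmull; lia.
have th_eq : th = t * s + l by [].
move=> + m_lt r_lt; rewrite mem_cat mem_P_CA //.
case/orP => [a_lt | /P_SAP[[m' [w [m'_lt w_lt ->]]] | [u u_lt ->]]].
- left; have : th * m <= th * (t - 1) by rewrite leq_mul2l; lia.
  by rewrite /prefix_len; lia.
- rewrite (_ : _ + _ = t * s + th * (m' + m) + (w + r)); last by rewrite mulnDr; lia.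
  apply: covered_shift => [_ | _ | t_le]; first lia.
    by have := block_len0_ge; lia.
  have [_ lower] := @block_len_ge (m' + m - t) ltac:(lia).
  by split; rewrite /block_len; [lia | case: ifP => ?; rewrite /inner_len; lia].
- rewrite (_ : _ + _ = t * s + th * (q + m) + (u + r)); last by rewrite mulnDr; lia.
  apply: covered_shift => [k_lt | _ | t_le].
  + by have := @qpar_lt_pred t z l ltac:(lia); lia.
  + by have := block_len0_ge; lia.
  + by have [_ lower] := @block_len_ge (q + m - t) ltac:(lia); split; lia.
Qed.

Lemma covered_add_SB a r : a \in A -> r < z -> covered (a + (t * s + th * (t - 1) + r)).
Proof.
move=> + r_lt; rewrite mem_cat mem_P_CA //.
case/orP => [a_lt | /P_SAP[[m [w [m_lt w_lt ->]]] | [u u_lt ->]]].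
- rewrite (_ : _ + _ = t * s + th * (t - 1) + (a + r)); last by lia.
  apply: covered_shift => [|_|]; try lia.
  by have := block_len0_ge; lia.
- right; exists m, (w + r); split; first by have := qpar_le t z l; lia.
    by have [lower _] := block_len_ge m_lt; lia.
  by rewrite /prefix_len; lia.
- right; exists q, (u + r); split => //; first by rewrite block_len_top /top_len; lia.
  by rewrite /prefix_len; lia.
Qed.

Lemma covered_sumset n : n \in sumset A B -> covered n.
Proof.
case/sumsetP => a [b [a_in + ->]]; rewrite mem_cat => /orP[/P_CBP | /P_SBP].
  by move=> [m [r [m_lt r_lt ->]]]; exact: covered_add_CB.
by move=> [r r_lt ->]; exact: covered_add_SB.
Qed.

Lemma prefix_in_sumset n : n < prefix_len -> n \in sumset A B.
Proof.
rewrite /prefix_len => n_lt; have ts_le : t * s <= th by rewrite leq_addr.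
have th_gt0 : 0 < th by rewrite /theta; nia.
case: (ltnP n (th * (t - 1) + t * s)) => [n_lt' | n_ge].
  rewrite (divn_eq n th) addnC mulnC; apply: mem_sumset_add.
    by apply: theta_prefix_mem; rewrite ltn_mod.
  rewrite -[th * _]addn0; apply: CB_mem => //; rewrite ltn_divLR //.
  by rewrite mulnC theta_mul_t; lia.
rewrite (_ : n = (n - (th * (t - 1) + t * s)) + (t * s + th * (t - 1) + 0)); last by lia.
by apply: mem_sumset_add; [apply: theta_prefix_mem; lia | apply: SB_mem].
Qed.

Lemma shifted_in_sumset [i m w k r] :
  m + k = t + i -> t * s + th * m + w \in A -> k < t -> r < s ->
  prefix_len + th * i + (l + (w + r)) \in sumset A B.
Proof.
move=> mk_eq a_in k_lt r_lt.
have -> : prefix_len + th * i + (l + (w + r)) = t * s + th * m + w + (th * k + r).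
  by rewrite addnA -prefix_shift -mk_eq mulnDr; lia.
exact: mem_sumset_add a_in (CB_mem k_lt r_lt).
Qed.

Lemma top_block_in_sumset y : y < top_len -> prefix_len + th * q + y \in sumset A B.
Proof.
move=> y_lt; have := qpar_mul_lt t z l z_gt0; rewrite /top_len in y_lt => ql_lt.
set u := minn y (z - q * l - 1).
rewrite (_ : _ + _ = (t * s + th * q + u) + (t * s + th * (t - 1) + (y - u))); last first.
  by rewrite /prefix_len; lia.
by apply: mem_sumset_add; [apply: high_SA_mem | apply: SB_mem]; lia.
Qed.

Lemma inner_block_in_sumset i y : i < q -> y < block_len i ->
  prefix_len + th * i + y \in sumset A B.
Proof.
move=> i_lt y_lt; have := qpar_mul_lt t z l z_gt0; have := qpar_le t z l => q_le ql_lt.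
case: (ltnP y l) => [y_lt_l | l_le_y].
  rewrite (_ : _ + _ = (t * s + th * i + y) + (t * s + th * (t - 1) + 0)).
    by apply: mem_sumset_add; [apply: low_SA_mem | apply: SB_mem].
  by rewrite /prefix_len; lia.
move: y_lt; rewrite -(subnKC l_le_y); move: (y - l) => y' y_lt {l_le_y}.
have [k k_eq] : exists k, q + k = t + i by exists (t + i - q); lia.
case: (ltnP y' (z - q * l + s - 1)) => [y'_lt | y'_ge].
  set u := minn y' (z - q * l - 1); rewrite (_ : y' = u + (y' - u)); last by lia.
  by apply: (shifted_in_sumset k_eq); [apply: high_SA_mem | |]; lia.
case: (ltnP y' (z - 1)) => [y'_lt | y'_ge'].
  have l_gt0 : 0 < l by case: (posnP l) y'_ge y'_lt => // ->; rewrite muln0; lia.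
  rewrite (_ : _ + _ = (t * s + th * i + (l - 1)) + (t * s + th * (t - 1) + (y' + 1))).
    by apply: mem_sumset_add; [apply: low_SA_mem | apply: SB_mem]; lia.
  by rewrite /prefix_len; lia.
have i1_lt : i.+1 < q.
  rewrite ltn_neqAle i_lt andbT; apply: contraTneq y_lt => i1_eq.
  by rewrite /block_len i1_eq ltnn eqxx /last_len -leqNgt; lia.
move: y_lt; rewrite /block_len i1_lt /inner_len => y_lt.
have [k' k'_eq] : exists k', q.-1 + k' = t + i by exists (t + i - q.-1); lia.
set w := minn y' (l - 1); rewrite (_ : y' = w + (y' - w)); last by lia.
by apply: (shifted_in_sumset k'_eq); [apply: low_SA_mem | |]; lia.
Qed.

Lemma sumset_coveredP n : reflect (covered n) (n \in sumset A B).
Proof.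
apply: (iffP idP) => [|[|[i [y [i_le y_lt ->]]]]]; [exact: covered_sumset | exact: prefix_in_sumset |].
case: (ltngtP i q) i_le y_lt => // [i_lt _ | -> _]; first exact: inner_block_in_sumset.
by rewrite block_len_top; exact: top_block_in_sumset.
Qed.

Lemma covered_lt n : covered n -> n < prefix_len + th * q + top_len.
Proof.
case=> [|[i [y [i_le y_lt ->]]]]; first lia.
have := block_len_chain i_le (leqnn q); rewrite block_len_top mulnBr.
by have := leq_mul (leqnn th) i_le; lia.
Qed.

Lemma block_mem i y : i < q -> y < th ->
  (prefix_len + th * i + y \in sumset A B) = (y < block_len i).
Proof.
move=> i_lt y_lt; apply/sumset_coveredP/idP => [[|[j [y' [j_le y'_lt]]]] | ]; first lia.
- case: (ltngtP j i) => [j_lt | i_lt_j | j_eq]; last by subst j; lia.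
  + have := block_len_chain (ltnW j_lt) (ltnW i_lt); rewrite mulnBr.
    by have := leq_mul (leqnn th) (ltnW j_lt); lia.
  + have : th * i.+1 <= th * j by rewrite leq_mul2l i_lt_j orbT.
    by rewrite mulnS; lia.
- by move=> y_lt'; right; exists i, y; split; lia.
Qed.

Lemma count_blocks k : k <= q ->
  count (mem (sumset A B)) (iota prefix_len (th * k)) = \sum_(i < k) minn (block_len i) th.
Proof.
elim: k => [|k IH] k_le; first by rewrite muln0 big_ord0.
rewrite big_ord_recr /= -IH ?(ltnW k_le) // mulnS addnC iotaD count_cat.
congr (_ + _); apply: count_iota_lt => y y_lt /=.
exact: block_mem.
Qed.

Lemma Nworkers_blocks :
  Nworkers s t z l = prefix_len + \sum_(i < q) minn (block_len i) th + top_len.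
Proof.
rewrite /Nworkers; set M := prefix_len + th * q + top_len.
have /perm_size -> : perm_eq (undup (sumset A B)) [seq n <- iota 0 M | n \in sumset A B].
  apply: uniq_perm; [exact: undup_uniq | exact: filter_uniq (iota_uniq _ _) |] => n.
  rewrite mem_undup mem_filter mem_iota /=.
  by case: (boolP (n \in _)) => //= /sumset_coveredP /covered_lt; lia.
rewrite size_filter /M iotaD (iotaD 0 prefix_len) !count_cat !add0n count_blocks //.
congr (_ + _ + _).
  rewrite (@count_iota_lt _ _ _ prefix_len) ?minnn // => y y_lt /=.
  by rewrite add0n y_lt; apply/sumset_coveredP; left.
rewrite (@count_iota_lt _ _ _ top_len) ?minnn // => y y_lt /=.
by rewrite y_lt; apply/sumset_coveredP; right; exists q, y; rewrite block_len_top.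
Qed.

Lemma Nworkers_lt_z : l < z ->
  Nworkers s t z l =
    prefix_len + (q - 1) * minn inner_len th + minn last_len th + top_len.
Proof.
move=> l_lt_z; rewrite Nworkers_blocks.
suff -> : \sum_(i < q) minn (block_len i) th = (q - 1) * minn inner_len th + minn last_len th.
  by rewrite addnA.
have [q' q_eq] : exists q', q = q'.+1.
  by exists q.-1; have := @qpar_gt0 t z l t_gt1 l_lt_z; lia.
rewrite q_eq big_ord_recr /= subSS subn0 /block_len q_eq ltnn eqxx.
rewrite (eq_bigr (fun _ => minn inner_len th)) ?sum_nat_const ?card_ord // => i _.
by rewrite ltnS ltn_ord.
Qed.


End SumsetStructure.

Local Open Scope ring_scope.

Lemma Nworkers_at_z s t z : (0 < s)%N -> (1 < t)%N -> (0 < z)%N ->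
  (Nworkers s t z z)%:Z = (theta s t z)%:Z * ((t : int) - 1) + 2 * (t * s)%N + 2 * (z : int) - 1.
Proof.
move=> s_gt0 t_gt1 z_gt0; rewrite Nworkers_blocks // /prefix_len /top_len qpar_z //.
rewrite big_ord0 mul0n subn0 addn0 /theta !subn1 !PoszD !PoszM.
by rewrite !predn_int ?(ltnW t_gt1) ?muln_gt0 ?z_gt0 //; lia.
Qed.

Section Regimes.
Variables s t z l : nat.
Hypotheses (s_gt0 : (0 < s)%N) (t_gt1 : (1 < t)%N) (l_lt_z : (l < z)%N).

Local Notation th := (theta s t l).
Local Notation q := (qpar t z l).
Local Notation M1 := (minn (inner_len s t z l) th).
Local Notation M2 := (minn (last_len s t z l) th).
Local Notation Nz := ((Nworkers s t z z)%:Z).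
Local Notation Gamma_agrees :=
  (Num.min (Gamma s t z l) Nz = Num.min (Nworkers s t z l)%:Z Nz).

Let z_gt0 : (0 < z)%N. Proof. exact: leq_ltn_trans l_lt_z. Qed.
Let l_le_z : (l <= z)%N. Proof. exact: ltnW. Qed.
Let q_gt0 : (0 < q)%N. Proof. exact: qpar_gt0. Qed.
Let q_le : (q <= t - 1)%N. Proof. exact: qpar_le. Qed.
Let ql_lt : (q * l < z)%N. Proof. exact: qpar_mul_lt. Qed.
Let q_max : q = (t - 1)%N \/ (z <= q * l + l)%N.
Proof. by case: (ltnP q (t - 1)) => [/qpar_lt_pred|]; [right | left; lia]. Qed.

Lemma Nworkers_int : (Nworkers s t z l)%:Z =
  th%:Z * ((t : int) - 1) + 2 * (t * s)%N + ((q : int) - 1) * M1 + M2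
  + 2 * (z : int) - (q * l)%N%:Z - 1.
Proof.
rewrite Nworkers_lt_z // /prefix_len /top_len /theta !subn1 !PoszD !PoszM !predn_int ?(ltnW t_gt1) //; first lia.
by rewrite subn_gt0; lia.
Qed.

Lemma min_Gamma_Ups12 : l = 0%N -> Gamma_agrees.
Proof.
move=> l0.
have M1E : M1 = minn (z + s - 1) (t * s) by rewrite /inner_len /theta l0; lia.
have M2E : M2 = minn (z + s - 1) (t * s) by rewrite /last_len /theta l0; lia.
rewrite Nworkers_int M1E M2E Nworkers_at_z // /Gamma l0 eqxx /= qpar0.
have Qt : ((t - 1)%N : int) = (t : int) - 1 by rewrite subn1 predn_int // ltnW.
case: ltnP => [far | near].
  by rewrite (minn_idPr _) ?Qt /theta ?PoszD ?PoszM; [congr Num.min; lia | lia].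
have P : 0 <= ((t : int) - 1) * ((s : int) - 1) by apply: mulr_ge0; lia.
by rewrite (minn_idPl _); [apply: min_lb_eq; rewrite ?Qt /theta ?PoszD ?PoszM; lia | lia].
Qed.

Lemma min_Gamma_Ups4 : (0 < l)%N -> (t * s < z)%N ->
  Gamma_agrees.
Proof.
move=> l_gt0 far.
have M1E : M1 = th by rewrite /inner_len /theta; lia.
have M2E : M2 = th by rewrite /last_len /theta; lia.
rewrite Nworkers_int M1E M2E /Gamma gtn_eqF // ltn_eqF // far /=; congr Num.min.
by rewrite /theta !PoszD !PoszM; lia.
Qed.

Lemma min_Gamma_Ups5 : (0 < l)%N -> (z <= t * s)%N -> (t * s < l + s - 1)%N ->
  Gamma_agrees.
Proof.
move=> l_gt0 z_le ts_lt.
have ts2 : (2 * s <= t * s)%N by rewrite leq_mul2r t_gt1 orbT.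
have q1 : q = 1%N.
  case: (ltnP 1 q) => [q_gt1 | ]; last lia.
  have : (2 * l <= q * l)%N by rewrite leq_mul2r q_gt1 orbT.
  lia.
have M2E : M2 = (l + z - 1)%N by rewrite /last_len /theta q1; lia.
rewrite Nworkers_int M2E Nworkers_at_z // /Gamma gtn_eqF // ltn_eqF // (leq_gtF z_le) ts_lt /=.
by apply: min_lb_eq; rewrite ?q1 /theta !PoszD !PoszM; nia.
Qed.

Lemma min_Gamma_Ups6 : (0 < l)%N -> (z <= t * s)%N -> (l + s - 1 < z)%N -> (s <= q * l)%N ->
  Gamma_agrees.
Proof.
move=> l_gt0 z_le lsz s_le.
have M1E : M1 = (l + z - 1)%N by rewrite /inner_len /theta; lia.
have M2E : M2 = (l + z - 1)%N by rewrite /last_len /theta; lia.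
have ls_le : (l + s - 1 <= t * s)%N by lia.
rewrite Nworkers_int M1E M2E /Gamma gtn_eqF // ltn_eqF //.
rewrite (leq_gtF z_le) (leq_gtF ls_le) lsz s_le /=.
by congr Num.min; rewrite /theta !PoszD !PoszM; lia.
Qed.

Lemma min_Gamma_Ups7 : (0 < l)%N -> (z <= t * s)%N -> (l + s - 1 < z)%N -> (q * l < s)%N ->
  Gamma_agrees.
Proof.
move=> l_gt0 z_le lsz ql_lt_s.
have qt : q = (t - 1)%N by case: q_max => //; lia.
have E1 : (maxn l (z - q * l) = z - q * l)%N by apply/maxn_idPr; lia.
have E2 : (maxn (z - 1) (s - 1 + (z - q * l)) = s - 1 + (z - q * l))%N by apply/maxn_idPr; lia.
have E3 : (maxn (z - 1) (z - q * l + s - 1) = s - 1 + (z - q * l))%N by lia.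
have ls_le : (l + s - 1 <= t * s)%N by lia.
rewrite Nworkers_int /inner_len /last_len E1 E2 E3 Nworkers_at_z // /Gamma gtn_eqF // ltn_eqF //.
rewrite (leq_gtF z_le) (leq_gtF ls_le) lsz (ltn_geF ql_lt_s) /=.
set m := minn _ _.
have m_ge : (z <= m)%N by rewrite leq_min /theta; lia.
have Qt : (q : int) = (t : int) - 1 by rewrite qt subn1 predn_int // ltnW.
have QL : ((q * l)%N : int) = ((t : int) - 1) * l by rewrite PoszM Qt.
have P1 : 0 <= ((t : int) - 1) * ((m : int) - (z : int)) by apply: mulr_ge0; lia.
have P2 : 0 <= ((t : int) - 1) * ((l : int) - 1) by apply: mulr_ge0; lia.
by apply: min_lb_eq; rewrite /theta ?PoszD ?PoszM Qt; lia.
Qed.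

Lemma min_Gamma_Ups8 : (0 < l)%N -> (z <= l + s - 1)%N -> (l + s - 1 <= t * s)%N -> (s <= q * l)%N ->
  Gamma_agrees.
Proof.
move=> l_gt0 z_le ls_le s_le.
have M1E : M1 = (2 * l + s - 1)%N by rewrite /inner_len /theta; lia.
have M2E : M2 = (l + z - 1)%N by rewrite /last_len /theta; lia.
rewrite Nworkers_int M1E M2E /Gamma gtn_eqF // ltn_eqF //.
rewrite (leq_gtF (leq_trans z_le ls_le)) (leq_gtF ls_le) (leq_gtF z_le) s_le /=.
by congr Num.min; rewrite /theta !PoszD !PoszM; lia.
Qed.

Lemma min_Gamma_Ups9 : (0 < l)%N -> (z <= l + s - 1)%N -> (l + s - 1 <= t * s)%N -> (q * l < s)%N ->
  Gamma_agrees.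
Proof.
move=> l_gt0 z_le ls_le ql_lt_s.
rewrite Nworkers_int Nworkers_at_z // /Gamma gtn_eqF // ltn_eqF //.
rewrite (leq_gtF (leq_trans z_le ls_le)) (leq_gtF ls_le) (leq_gtF z_le) (ltn_geF ql_lt_s) /=.
case: q_max => [qt | z_le_qll].
  set m1 := M1; set m2 := M2.
  have m1_ge : (z <= m1)%N by rewrite /m1 /inner_len /theta; lia.
  have m2_ge : (z <= m2)%N by rewrite /m2 /last_len /theta; lia.
  have Qt : (q : int) = (t : int) - 1 by rewrite qt subn1 predn_int // ltnW.
  have QL : ((q * l)%N : int) = ((t : int) - 1) * l by rewrite PoszM Qt.
  have P1 : 0 <= ((t : int) - 2) * ((m1 : int) - (z : int)) by apply: mulr_ge0; lia.
  have P2 : 0 <= ((t : int) - 1) * ((s : int) + (l : int) - (z : int) - 1) by apply: mulr_ge0; lia.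
  have P3 : 0 <= ((t : int) - 2) * ((s : int) + (l : int)) by apply: mulr_ge0; lia.
  by apply: min_lb_eq; rewrite /theta ?PoszD ?PoszM Qt; lia.
have M1E : M1 = (2 * l + s - 1)%N by rewrite /inner_len /theta; lia.
have M2E : M2 = (l + z - q * l + s - 1)%N by rewrite /last_len /theta; lia.
by rewrite M1E M2E; congr Num.min; rewrite /theta ?PoszD ?PoszM; lia.
Qed.

Lemma min_Gamma_Nworkers : Gamma_agrees.
Proof.
have [l0 | l_gt0] := posnP l; first exact: min_Gamma_Ups12.
have [far | z_le] := ltnP (t * s) z; first exact: min_Gamma_Ups4.
have [ts_lt | ls_le] := ltnP (t * s) (l + s - 1); first exact: min_Gamma_Ups5.
have [lsz | z_le'] := ltnP (l + s - 1) z; have [s_le | ql_lt_s] := leqP s (q * l).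
- exact: min_Gamma_Ups6.
- exact: min_Gamma_Ups7.
- exact: min_Gamma_Ups8.
- exact: min_Gamma_Ups9.
Qed.

End Regimes.

Lemma Gamma_at_z s t z : (0 < s)%N -> (1 < t)%N -> (0 < z)%N ->
  Gamma s t z z = (Nworkers s t z z)%:Z.
Proof.
move=> s_gt0 t_gt1 z_gt0; rewrite Nworkers_at_z // /Gamma gtn_eqF // eqxx /=.
by rewrite /theta !PoszD !PoszM; lia.
Qed.

Theorem theorem5 (s t z : nat) :
  (0 < s)%N -> (0 < t)%N -> (0 < z)%N ->
  (N_AGE s t z)%:Z =
    if t == 1%N then (2 * s + 2 * z - 1)%N%:Z
    else \big[Num.min/Gamma s t z 0]_(l < z.+1) Gamma s t z l.
Proof.
move=> s_gt0 t_gt0 z_gt0; rewrite /N_AGE; case: eqP => [-> | /eqP t_neq1].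
  rewrite Nworkers_t1 //; congr Posz; apply: bigmin_eq_id => l _.
  by rewrite Nworkers_t1.
have t_gt1 : (1 < t)%N by rewrite ltn_neqAle eq_sym t_neq1.
rewrite (big_morph Posz (id1 := (Nworkers s t z 0)%:Z) (op1 := Num.min)) //; last first.
  by move=> a b; lia.
apply: (@eq_bigmin_ord_last _ _ z (fun l => (Nworkers s t z l)%:Z)) => [|l].
  by rewrite Gamma_at_z.
rewrite leq_eqVlt => /orP[/eqP -> | l_lt_z]; first by rewrite Gamma_at_z.
by rewrite min_Gamma_Nworkers.
Qed.
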